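(* In the standing setting, the map $g:Q\to Q'$ satisfies the analogues of (D), (U), (S): (D2) for all $A',B'\in Q'$ with $B'\subseteq A'$ and every $A\in Q$ with $g(A)=A'$, there exists $B\in Q$ with $g(B)=B'$ and $B\subseteq A$; (U2) for all $A',B'\in Q'$ with $B'\subseteq A'$ and every $B\in Q$ with $g(B)=B'$, there exists $A\in Q$ with $g(A)=A'$ and $B\subseteq A$; (S2) for all $A,B,C\in Q$, if $C\subseteq B\subseteq A$ and $g(C)=g(A)$, then $g(B)=g(A)$.
   Context: Standing setting: $(P,\preceq)$ is a finite poset with a bottom and a top element; $f:P\to P'$ is a surjective map onto $P'=f(P)$; $f^{-1}(a')=\{a\in P: f(a)=a'\}$; the relation $\preceq'$ on $P'$ is defined by $b'\preceq' a'$ iff there exist $a\in f^{-1}(a')$, $b\in f^{-1}(b')$ with $b\preceq a$. Assume the three conditions: (D) for all $a',b'\in P'$ with $b'\preceq' a'$ and every $a\in f^{-1}(a')$ there is $b\in f^{-1}(b')$ with $b\preceq a$; (U) for all $a',b'\in P'$ with $b'\preceq' a'$ and every $b\in f^{-1}(b')$ there is $a\in f^{-1}(a')$ with $b\preceq a$; (S) for all $a,b,c\in P$, if $c\preceq b\preceq a$ and $f(c)=f(a)$ then $f(b)=f(a)$. (Then $(P',\preceq')$ is a poset.) A down-set of a poset is a subset $A$ such that $a\in A$ and $b\preceq a$ imply $b\in A$. $Q$ is the set of nonempty down-sets of $(P,\preceq)$ and $Q'$ the set of nonempty down-sets of $(P',\preceq')$, each ordered by inclusion. $g:2^P\to 2^{P'}$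 is $g(A)=\{f(a):a\in A\}$. *)

From mathcomp Require Import all_boot.
Set Implicit Arguments. Unset Strict Implicit. Unset Printing Implicit Defensive.

Definition partial_order (T : finType) (le : rel T) : Prop :=
  [/\ reflexive le, antisymmetric le & transitive le].

Definition is_bottom (T : finType) (le : rel T) (x : T) := forall y, le x y.
Definition is_top (T : finType) (le : rel T) (x : T) := forall y, le y x.

Definition lift_le (T T' : finType) (f : T -> T') (le : rel T) : rel T' :=
  fun b' a' => [exists a, exists b, [&& f a == a', f b == b' & le b a]].

Definition cond_D (T T' : finType) (f : T -> T') (le : rel T) : Prop :=
  forall a' b' : T', lift_le f le b' a' ->
    forall a, f a = a' -> exists b, f b = b' /\ le b a.
Definition cond_U (T T' : finType) (f : T -> T') (le : rel T) : Prop :=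
  forall a' b' : T', lift_le f le b' a' ->
    forall b, f b = b' -> exists a, f a = a' /\ le b a.
Definition cond_S (T T' : finType) (f : T -> T') (le : rel T) : Prop :=
  forall a b c : T, le c b -> le b a -> f c = f a -> f b = f a.

Definition down_set (T : finType) (le : rel T) (A : {set T}) : Prop :=
  forall a b, a \in A -> le b a -> b \in A.
Definition in_Q (T : finType) (le : rel T) (A : {set T}) : Prop :=
  A != set0 /\ down_set le A.

Definition gmap (T T' : finType) (f : T -> T') (A : {set T}) : {set T'} := f @: A.

From mathcomp Require Import all_boot.

(* The three transfer properties of g = (A |-> f @: A) between nonempty
   down-sets are proved by explicit constructions; none of them needs the
   order axioms, the bounds, or (D), (U), (S).
   - f is monotone from le to lift_le f le, so the preimage of a lift_le
     down-set is a le down-set, and down-sets are closed under intersection.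
   - For B' contained in f @: A, the set A :&: f @^-1: B' has image exactly B'.
     Taking the given A witnesses (D2); with A = [set: T] and f surjective,
     f @^-1: A' witnesses (U2).
   - A set whose image is a nonempty set is itself nonempty, which gives the
     nonemptiness part of membership in Q for both witnesses.
   - (S2) is the monotonicity of images: f @: C <= f @: B <= f @: A. *)

Section Transfer.

Variables (T T' : finType) (le : rel T) (f : T -> T').

Lemma lift_le_image {a b : T} : le b a -> lift_le f le (f b) (f a).
Proof.
by move=> le_ba; apply/existsP; exists a; apply/existsP; exists b; rewrite !eqxx.
Qed.

Lemma down_set_preim {A' : {set T'}} :
  down_set (lift_le f le) A' -> down_set le (f @^-1: A').
Proof.
move=> dA' a b; rewrite !inE => fa_in le_ba.
exact: (dA' (f a) (f b) fa_in (lift_le_image le_ba)).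
Qed.

Lemma down_setI {A B : {set T}} :
  down_set le A -> down_set le B -> down_set le (A :&: B).
Proof.
move=> dA dB a b; rewrite !inE => /andP[aA aB] le_ba.
by rewrite (dA a b aA le_ba) (dB a b aB le_ba).
Qed.

Lemma neq0_of_image {A : {set T}} : gmap f A != set0 -> A != set0.
Proof. by rewrite /gmap imset_eq0. Qed.

Lemma gmap_setI_preim {A : {set T}} {B' : {set T'}} :
  B' \subset gmap f A -> gmap f (A :&: f @^-1: B') = B'.
Proof.
move=> sub_B'; apply/setP => b'; apply/imsetP/idP.
- by case=> a; rewrite !inE => /andP[_ fa_in] ->.
- move=> b'_in; case/imsetP: (subsetP sub_B' b' b'_in) => a aA def_b'.
  by exists a; rewrite // !inE aA -def_b'.
Qed.

Lemma gmap_preim (A' : {set T'}) :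
  (forall a', exists a, f a = a') -> gmap f (f @^-1: A') = A'.
Proof.
move=> f_surj; rewrite -[f @^-1: A']setTI gmap_setI_preim //.
apply/subsetP => a' _; have [a <-] := f_surj a'.
exact: imset_f (in_setT a).
Qed.

Lemma transfer_D (A' B' : {set T'}) (A : {set T}) :
  in_Q (lift_le f le) B' -> B' \subset A' -> in_Q le A -> gmap f A = A' ->
  exists B : {set T}, [/\ in_Q le B, gmap f B = B' & B \subset A].
Proof.
move=> [nB' dB'] sBA [_ dA] gA; rewrite -gA in sBA.
have gB := gmap_setI_preim sBA.
exists (A :&: f @^-1: B'); split=> //; last exact: subsetIl.
split; first by apply: neq0_of_image; rewrite gB.
exact: down_setI dA (down_set_preim dB').
Qed.

Lemma transfer_U (A' B' : {set T'}) (B : {set T}) :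
  (forall a', exists a, f a = a') ->
  in_Q (lift_le f le) A' -> B' \subset A' -> gmap f B = B' ->
  exists A : {set T}, [/\ in_Q le A, gmap f A = A' & B \subset A].
Proof.
move=> f_surj [nA' dA'] sBA gB; have gA := gmap_preim A' f_surj.
exists (f @^-1: A'); split=> //.
- split; first by apply: neq0_of_image; rewrite gA.
  exact: down_set_preim dA'.
- apply/subsetP => b bB; rewrite inE; apply: (subsetP sBA).
  by rewrite -gB; exact: imset_f.
Qed.

Lemma transfer_S (A B C : {set T}) :
  C \subset B -> B \subset A -> gmap f C = gmap f A -> gmap f B = gmap f A.
Proof.
move=> sCB sBA gCA; apply/eqP; rewrite eqEsubset imsetS //=.
by rewrite -[gmap f A]gCA imsetS.
Qed.

End Transfer.

Theorem lemma6 (T T' : finType) (le : rel T) (f : T -> T')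
  (Hpo : partial_order le)
  (Hbot : exists x0, is_bottom le x0) (Htop : exists x1, is_top le x1)
  (Hsurj : forall a' : T', exists a, f a = a')
  (HD : cond_D f le) (HU : cond_U f le) (HS : cond_S f le) :
  (* (D2) *)
  (forall A' B' : {set T'}, in_Q (lift_le f le) A' -> in_Q (lift_le f le) B' ->
     B' \subset A' ->
     forall A : {set T}, in_Q le A -> gmap f A = A' ->
       exists B : {set T}, [/\ in_Q le B, gmap f B = B' & B \subset A])
  /\
  (* (U2) *)
  (forall A' B' : {set T'}, in_Q (lift_le f le) A' -> in_Q (lift_le f le) B' ->
     B' \subset A' ->
     forall B : {set T}, in_Q le B -> gmap f B = B' ->
       exists A : {set T}, [/\ in_Q le A, gmap f A = A' & B \subset A])
  /\
  (* (S2) *)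
  (forall A B C : {set T}, in_Q le A -> in_Q le B -> in_Q le C ->
     C \subset B -> B \subset A -> gmap f C = gmap f A -> gmap f B = gmap f A).
Proof.
split; [|split].
- by move=> A' B' _ QB' sBA A QA gA; exact: transfer_D QB' sBA QA gA.
- by move=> A' B' QA' _ sBA B _ gB; exact: transfer_U Hsurj QA' sBA gB.
- by move=> A B C _ _ _; exact: transfer_S.
Qed.
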